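(* Let $\mathscr{H}$ be a complex Hilbert space, $N(\cdot)$ a norm on $\mathbb{B}(\mathscr{H})$, and $B,C\in\mathbb{B}(\mathscr{H})$. Then: (a) $w_{(N,e)}(B,C)=\frac{1}{\sqrt2}\,w_{(N,e)}(B+C,B-C)$; (b) $w_{(N,e)}(\Re B,\Im B)=\frac{1}{\sqrt2}\,w_{(N,e)}(B,B^* )=w_N(B)$; (c) $w_{(N,e)}(B,B)=\sqrt2\, w_N(B)$; (d) $w_{(N,e)}(B^*,C^* )=w_{(N,e)}(B,C)$; (e) if $N$ is weakly unitarily invariant, i.e. $N(U^*TU)=N(T)$ for all $T\in\mathbb{B}(\mathscr{H})$ and all unitary $U\in\mathbb{B}(\mathscr{H})$, then $w_{(N,e)}(U^*BU,U^*CU)=w_{(N,e)}(B,C)$ for every unitary $U\in\mathbb{B}(\mathscr{H})$; (f) $$w_{(N,e)}(B,C)=\sup_{|\lambda_1|^2+|\lambda_2|^2\leq1}\ \sup_{\alpha,\beta\in\mathbb{R},\ \alpha^2+\beta^2=1} N\big(\alpha\Re(\lambda_1B+\lambda_2C)+\beta\Im(\lambda_1B+\lambda_2C)\big),$$ where $\lambda_1,\lambda_2$ range over $\mathbb{C}$.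
   Context: For $T\in\mathbb{B}(\mathscr{H})$: $\Re(T)=\frac12(T+T^* )$, $\Im(T)=\frac{1}{2i}(T-T^* )$, and $w_N(T)=\sup_{\theta\in\mathbb{R}}N(\Re(e^{i\theta}T))$. For $B,C\in\mathbb{B}(\mathscr{H})$, $w_{(N,e)}(B,C)=\sup_{\lambda_1,\lambda_2\in\mathbb{C},\ |\lambda_1|^2+|\lambda_2|^2\leq 1}\sup_{\theta\in\mathbb{R}} N(\Re(e^{i\theta}(\lambda_1B+\lambda_2C)))$. *)

From HB Require Import structures.
From mathcomp Require Import all_boot all_order all_algebra.
From mathcomp Require Import all_classical all_reals.
From mathcomp Require Import ereal trigo.
From mathcomp Require Import complex.
From Stdlib Require Import ClassicalEpsilon.
Set Implicit Arguments. Unset Strict Implicit. Unset Printing Implicit Defensive.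
Import Order.TTheory GRing.Theory Num.Theory.
Local Open Scope ring_scope.

Section HilbertDefs.
Variables (R : realType) (V : lmodType R[i]) (ip : V -> V -> R[i]).

Definition is_inner_product : Prop :=
  [/\ forall a x y z, ip (a *: x + y) z = a * ip x z + ip y z,
      forall x y, ip y x = conjc (ip x y),
      forall x, 0 <= ip x x
    & forall x, ip x x = 0 -> x = 0].

Definition hnorm (x : V) : R := Num.sqrt (complex.Re (ip x x)).

Definition ip_complete : Prop :=
  forall u : nat -> V,
    (forall e : R, 0 < e -> exists n0, forall m n, (n0 <= m)%N -> (n0 <= n)%N ->
        hnorm (u m - u n) < e) ->
    exists l : V, forall e : R, 0 < e -> exists n0, forall n, (n0 <= n)%N ->
        hnorm (u n - l) < e.

Definition hilbert : Prop := is_inner_product /\ ip_complete.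

Definition bounded_op (T : V -> V) : Prop :=
  (forall (a : R[i]) x y, T (a *: x + y) = a *: T x + T y) /\
  exists M : R, forall x, hnorm (T x) <= M * hnorm x.

Definition zero_op : V -> V := fun _ => 0.
Definition add_op (S T : V -> V) : V -> V := fun x => S x + T x.
Definition scale_op (c : R[i]) (T : V -> V) : V -> V := fun x => c *: T x.
Definition comp_op (S T : V -> V) : V -> V := fun x => S (T x).

Definition adj (T : V -> V) : V -> V :=
  epsilon (inhabits zero_op) (fun S => forall x y, ip (T x) y = ip x (S y)).

Definition unitary (U : V -> V) : Prop :=
  bounded_op U /\ comp_op (adj U) U = id /\ comp_op U (adj U) = id.

Definition re_op (T : V -> V) : V -> V :=
  scale_op (2^-1) (add_op T (adj T)).
Definition im_op (T : V -> V) : V -> V :=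
  scale_op ((2 * Complex 0 1)^-1) (add_op T (scale_op (-1) (adj T))).

Definition op_norm (N : (V -> V) -> R) : Prop :=
  [/\ forall T, bounded_op T -> 0 <= N T,
      forall T, bounded_op T -> N T = 0 -> T = zero_op,
      forall c T, bounded_op T -> N (scale_op c T) = ComplexField.Normc.normc c * N T
    & forall S T, bounded_op S -> bounded_op T -> N (add_op S T) <= N S + N T].

Definition weakly_unitarily_invariant (N : (V -> V) -> R) : Prop :=
  forall T U, bounded_op T -> unitary U -> N (comp_op (adj U) (comp_op T U)) = N T.

Definition expi (t : R) : R[i] := (cos t +i* sin t)%C.

Definition wN (N : (V -> V) -> R) (T : V -> V) : \bar R :=
  ereal_sup [set ((N (re_op (scale_op (expi t) T)))%:E)%E | t in [set: R]].

Definition unit_pair (l1 l2 : R[i]) : Prop :=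
  ComplexField.Normc.normc l1 ^+ 2 + ComplexField.Normc.normc l2 ^+ 2 <= 1.

Definition wNe (N : (V -> V) -> R) (B C : V -> V) : \bar R :=
  ereal_sup [set x : \bar R | exists (l1 l2 : R[i]) (t : R),
      unit_pair l1 l2 /\
      x = ((N (re_op (scale_op (expi t)
               (add_op (scale_op l1 B) (scale_op l2 C)))))%:E)%E].

End HilbertDefs.

(* Every identity is a reparametrisation of the supremum defining w_(N,e).
   For (a) and the first half of (b), (l1, l2) |-> ((l1 + l2)/sqrt 2, (l1 - l2)/sqrt 2)
   is an involution of the unit ball of C^2, and l1 B + l2 C (resp. l1 Re B + l2 Im B)
   becomes a multiple of the corresponding combination of B + C and B - C (resp. of B
   and adj B). For (c) and the second half of (b), Re (adj X) = Re X turns every term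
   into N(Re(z B)) with |z| <= |l1| + |l2| <= sqrt 2, and the polar decomposition of z
   gives N(Re(z B)) = |z| N(Re(e^{is} B)); the bound sqrt 2 is attained at
   l1 = l2 = e^{is}/sqrt 2 (resp. l2 = conj l1). (d) conjugates (l1, l2, theta) through
   Re (adj X) = Re X, (e) uses Re(U' X U) = U' (Re X) U for U' = adj U, and (f) is
   Re(e^{i theta} X) = cos theta Re X - sin theta Im X.
   The analytic input is the existence of adjoints, which follows from the Riesz
   representation theorem, proved via the point of minimal norm of a closed hyperplane. *)

From HB Require Import structures.
From mathcomp Require Import all_boot all_order all_algebra.
From mathcomp Require Import all_classical all_reals.
From mathcomp Require Import ereal trigo.
From mathcomp Require Import complex.
From mathcomp Require Import ring lra.
From Stdlib Require Import ClassicalEpsilon.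
Import Order.TTheory GRing.Theory Num.Theory.
Set Implicit Arguments. Unset Strict Implicit. Unset Printing Implicit Defensive.
Local Open Scope ring_scope.
Local Open Scope complex_scope.

Local Notation normc := ComplexField.Normc.normc.

Section ComplexFacts.
Context {R : realType}.
Implicit Types (r s t : R) (a b z : R[i]).

Lemma sqr_normcE z : normc z ^+ 2 = complex.Re z ^+ 2 + complex.Im z ^+ 2.
Proof. by case: z => a b /=; rewrite sqr_sqrtr // addr_ge0 // sqr_ge0. Qed.

Lemma normc_ge0 z : 0 <= normc z.
Proof. by case: z => a b /=; rewrite sqrtr_ge0. Qed.

Lemma normc_real r : 0 <= r -> normc r%:C = r.
Proof. by move=> r0; rewrite /= expr0n /= addr0 sqrtr_sqr ger0_norm. Qed.

Lemma conjc_conjc z : conjc (conjc z) = z.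
Proof. by case: z => a b /=; rewrite opprK. Qed.

Lemma normc_conj z : normc (conjc z) = normc z.
Proof. by case: z => a b /=; rewrite sqrrN. Qed.

Lemma normc_i z : normc ('i * z) = normc z.
Proof. by rewrite ComplexField.Normc.normcM /= expr0n expr1n add0r sqrtr1 mul1r. Qed.

Lemma Re_le_normc z : complex.Re z <= normc z.
Proof.
case: z => a b /=; apply: (le_trans (ler_norm a)).
by rewrite -sqrtr_sqr ler_sqrt ?addr_ge0 ?sqr_ge0 // lerDl sqr_ge0.
Qed.

Lemma normc_expi t : normc (expi t) = 1.
Proof. by rewrite /expi /= cos2Dsin2 sqrtr1. Qed.

Lemma conjc_expi t : conjc (expi t) = expi (- t).
Proof. by rewrite /expi /= cosN sinN. Qed.

Lemma expi0 : expi (0 : R) = 1.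
Proof. by rewrite /expi cos0 sin0. Qed.

Lemma polar z : exists t, z = (normc z)%:C * expi t.
Proof.
have [->|z0] := eqVneq z 0; first by exists 0; rewrite ComplexField.Normc.normc0 mul0r.
case: z z0 => a b z0; set r := normc (a +i* b).
have r0 : 0 < r.
  rewrite lt0r normc_ge0 andbT; apply/eqP => /ComplexField.Normc.eq0_normc h.
  by rewrite h eqxx in z0.
pose x := a / r; pose y := b / r.
have xy : x ^+ 2 + y ^+ 2 = 1.
  have r2 : r ^+ 2 = a ^+ 2 + b ^+ 2 by rewrite sqr_normcE.
  by rewrite !expr_div_n -mulrDl -r2 divff // expf_neq0 // gt_eqF.
have x1 : -1 <= x <= 1 by apply/andP; split; nra.
have cx : cos (acos x) = x by apply: acosK; rewrite in_itv /=.
have sx : sin (acos x) = `|y|.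
  by rewrite sin_acos // -sqrtr_sqr; congr Num.sqrt; lra.
have [y0|y0] := lerP 0 y; [exists (acos x)|exists (- acos x)];
  rewrite /expi ?cosN ?sinN cx sx ?(ger0_norm y0) ?(ltr0_norm y0) ?opprK; simpc;
  by congr (_ +i* _); rewrite /x /y; field; rewrite gt_eqF.
Qed.

Lemma invSn_lt (e : R) : 0 < e -> exists n0, forall n, (n0 <= n)%N -> n.+1%:R^-1 < e.
Proof.
move=> e0; exists (Num.bound e^-1) => n n0n.
rewrite -[e]invrK ltf_pV2 ?posrE ?invr_gt0 ?ltr0Sn //.
apply: (lt_le_trans (archi_boundP _)); first by rewrite invr_ge0 ltW.
by rewrite ler_nat leqW.
Qed.

Lemma invC2 : (2 : R[i])^-1 = (2^-1 : R)%:C.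
Proof.
apply: (@mulfI _ 2); rewrite ?pnatr_eq0 // divff ?pnatr_eq0 //.
by simpc; congr (_ +i* _); field.
Qed.

Lemma invC2i : (2 * 'i : R[i])^-1 = 0 +i* (- 2^-1).
Proof.
have i2 : 2 * 'i != 0 :> R[i].
  by rewrite mulf_eq0 pnatr_eq0 negb_or /= eq_complex /= oner_eq0 andbF.
apply: (mulfI i2); rewrite divff //.
by simpc; congr (_ +i* _); field.
Qed.

Local Notation sqrt2 := (Num.sqrt 2 : R).

Lemma sqrt2_gt0 : 0 < sqrt2.
Proof. by rewrite sqrtr_gt0. Qed.

Lemma sqr_sqrt2_inv : sqrt2^-1 ^+ 2 = 2^-1.
Proof. by rewrite exprVn sqr_sqrtr. Qed.

Lemma sqrt2_invC_sqr : (sqrt2^-1)%:C * (sqrt2^-1)%:C = (2 : R[i])^-1.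
Proof. by rewrite -rmorphM /= -expr2 sqr_sqrt2_inv invC2. Qed.

Lemma sqrt2_inv_add : sqrt2^-1 + sqrt2^-1 = sqrt2.
Proof.
have s0 := sqrt2_gt0; apply: (@mulfI _ sqrt2); first by rewrite gt_eqF.
by rewrite mulrDr mulfV ?gt_eqF // -expr2 sqr_sqrtr.
Qed.

Lemma hadamardK a b :
  (sqrt2^-1)%:C * ((sqrt2^-1)%:C * (a + b) + (sqrt2^-1)%:C * (a - b)) = a /\
  (sqrt2^-1)%:C * ((sqrt2^-1)%:C * (a + b) - (sqrt2^-1)%:C * (a - b)) = b.
Proof. by rewrite -!mulrBr -!mulrDr !mulrA sqrt2_invC_sqr; split; field. Qed.

Lemma sqr_normc_hadamard a b :
  normc ((sqrt2^-1)%:C * (a + b)) ^+ 2 + normc ((sqrt2^-1)%:C * (a - b)) ^+ 2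
  = normc a ^+ 2 + normc b ^+ 2.
Proof.
rewrite !ComplexField.Normc.normcM !exprMn normc_real ?invr_ge0 ?sqrtr_ge0 //.
by rewrite sqr_sqrt2_inv !sqr_normcE; case: a => a1 a2; case: b => b1 b2 /=; field.
Qed.

Lemma sqrt2_inv_expi_conj t :
  (sqrt2^-1)%:C * expi t + conjc ((sqrt2^-1)%:C * expi (- t)) = sqrt2%:C * expi t.
Proof.
have := sqrt2_inv_add; set k := sqrt2^-1 => <-.
by rewrite /expi cosN sinN; simpc; congr (_ +i* _); ring.
Qed.

Lemma sqrt2_mulK z : sqrt2%:C * ((sqrt2^-1)%:C * z) = z.
Proof. by rewrite mulrA -rmorphM /= mulfV ?gt_eqF ?sqrt2_gt0 // mul1r. Qed.

Lemma mulr_ii z : 'i * ('i * z) = - z.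
Proof. by case: z => a b; simpc. Qed.

Lemma unit_pair_normc a b a' b' :
  normc a' = normc a -> normc b' = normc b -> unit_pair a b -> unit_pair a' b'.
Proof. by rewrite /unit_pair => -> ->. Qed.

Lemma unit_pair_conj a b : unit_pair a b -> unit_pair (conjc a) (conjc b).
Proof. by apply: unit_pair_normc; rewrite normc_conj. Qed.

Lemma unit_pair_hadamard a b : unit_pair a b ->
  unit_pair ((sqrt2^-1)%:C * (a + b)) ((sqrt2^-1)%:C * (a - b)).
Proof. by rewrite /unit_pair sqr_normc_hadamard. Qed.

Lemma unit_pair_sqrt2_inv s t : unit_pair ((sqrt2^-1)%:C * expi s) ((sqrt2^-1)%:C * expi t).
Proof.
rewrite /unit_pair !ComplexField.Normc.normcM !normc_expi !mulr1.
by rewrite normc_real ?invr_ge0 ?sqrtr_ge0 // sqr_sqrt2_inv; lra.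
Qed.

Lemma normc_add_le_sqrt2 a b : unit_pair a b -> normc a + normc b <= sqrt2.
Proof.
move=> ab; rewrite -ler_sqr ?nnegrE ?addr_ge0 ?normc_ge0 ?sqrtr_ge0 // sqr_sqrtr //.
by move: ab; rewrite /unit_pair; have := sqr_ge0 (normc a - normc b); nra.
Qed.

Lemma unit_circle_cos_sin r s : r ^+ 2 + s ^+ 2 = 1 -> exists t, cos t = r /\ sin t = s.
Proof.
move=> rs; have [t] := polar (r +i* s).
by rewrite /= rs sqrtr1 /expi; simpc => -[-> ->]; exists t.
Qed.

End ComplexFacts.

Section ExtendedReals.
Context {R : realType}.
Implicit Types A S : set (\bar R).

Lemma ereal_sup_cofinal A S :
  (forall x, A x -> exists2 y, S y & (x <= y)%E) ->
  (forall y, S y -> exists2 x, A x & (y <= x)%E) -> ereal_sup A = ereal_sup S.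
Proof.
move=> AS SA; apply/le_anti/andP; split; apply: ge_ereal_sup => x.
  by move=> /AS[y Sy xy]; apply: le_ereal_sup_tmp; exists y.
by move=> /SA[y Ay xy]; apply: le_ereal_sup_tmp; exists y.
Qed.

Lemma ereal_sup_cofinal_pZ A S (c : R) : 0 < c ->
  (forall x, A x -> exists2 y, S y & (x <= c%:E * y)%E) ->
  (forall y, S y -> exists2 x, A x & (c%:E * y <= x)%E) ->
  ereal_sup A = (c%:E * ereal_sup S)%E.
Proof.
move=> c0 AS SA; rewrite -ereal_sup_pZl //.
apply: ereal_sup_cofinal => [x /AS[y Sy xy] | _ [y Sy <-]]; last exact: SA.
by exists (c%:E * y)%E => //; exists y.
Qed.

End ExtendedReals.

Section InnerProduct.
Variables (R : realType) (V : lmodType R[i]) (ip : V -> V -> R[i]).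
Hypothesis ip_inner : is_inner_product ip.
Implicit Types (a : R[i]) (x y z : V).

Local Notation nsq x := (complex.Re (ip x x)).
Local Notation hnorm := (hnorm ip).

Lemma ipDZl a x y z : ip (a *: x + y) z = a * ip x z + ip y z.
Proof. by case: ip_inner => H _ _ _; apply: H. Qed.

Lemma ipC x y : ip y x = conjc (ip x y).
Proof. by case: ip_inner => _ H _ _; apply: H. Qed.

Lemma ipxx_eq0 x : ip x x = 0 -> x = 0.
Proof. by case: ip_inner => _ _ _ H; apply: H. Qed.

Lemma ip0l z : ip 0 z = 0.
Proof.
have := ipDZl 1 0 0 z; rewrite scaler0 addr0 mul1r => H.
by apply: (addrI (ip 0 z)); rewrite addr0 -H.
Qed.

Lemma ipDl x y z : ip (x + y) z = ip x z + ip y z.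
Proof. by rewrite -[x]scale1r ipDZl mul1r scale1r. Qed.

Lemma ipZl a x z : ip (a *: x) z = a * ip x z.
Proof. by rewrite -[a *: x]addr0 ipDZl ip0l addr0. Qed.

Lemma ipNl x z : ip (- x) z = - ip x z.
Proof. by rewrite -scaleN1r ipZl mulN1r. Qed.

Lemma ipBl x y z : ip (x - y) z = ip x z - ip y z.
Proof. by rewrite ipDl ipNl. Qed.

Lemma ip0r z : ip z 0 = 0.
Proof. by rewrite ipC ip0l conjc0. Qed.

Lemma ipDr x y z : ip x (y + z) = ip x y + ip x z.
Proof. by rewrite ipC ipDl rmorphD /= -!ipC. Qed.

Lemma ipZr a x z : ip x (a *: z) = conjc a * ip x z.
Proof. by rewrite ipC ipZl rmorphM /= -!ipC. Qed.

Lemma ipNr x z : ip x (- z) = - ip x z.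
Proof. by rewrite ipC ipNl rmorphN /= -!ipC. Qed.

Lemma ipBr x y z : ip x (y - z) = ip x y - ip x z.
Proof. by rewrite ipDr ipNr. Qed.

Lemma ipxxE x : ip x x = (nsq x)%:C.
Proof.
have : 0 <= ip x x by case: ip_inner => _ _ H _; apply: H.
by move/ger0_Im; case: (ip x x) => a b /= ->.
Qed.

Lemma nsq_ge0 x : 0 <= nsq x.
Proof. by case: ip_inner => _ _ H _; have := H x; rewrite lecE => /andP[]. Qed.

Lemma nsq_eq0 x : nsq x = 0 -> x = 0.
Proof. by move=> H; apply: ipxx_eq0; rewrite ipxxE H. Qed.

Lemma sqr_hnorm x : hnorm x ^+ 2 = nsq x.
Proof. by rewrite /hnorm sqr_sqrtr // nsq_ge0. Qed.

Lemma hnorm_ge0 x : 0 <= hnorm x.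
Proof. by rewrite /hnorm sqrtr_ge0. Qed.

Lemma ler_hnorm x y : (hnorm x <= hnorm y) = (nsq x <= nsq y).
Proof. by rewrite /hnorm ler_sqrt // nsq_ge0. Qed.

Lemma nsqD x y : nsq (x + y) = nsq x + nsq y + 2 * complex.Re (ip x y).
Proof.
rewrite ipDl !ipDr (ipC x y) (ipxxE x) (ipxxE y).
by case: (ip x y) => a b /=; simpc => /=; ring.
Qed.

Lemma nsqZ a x : nsq (a *: x) = normc a ^+ 2 * nsq x.
Proof. by rewrite ipZl ipZr ipxxE sqr_normcE; case: a => p q /=; simpc => /=; ring. Qed.

Lemma hnormZ a x : hnorm (a *: x) = normc a * hnorm x.
Proof. by rewrite /hnorm nsqZ sqrtrM ?sqr_ge0 // sqrtr_sqr ger0_norm // normc_ge0. Qed.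

Lemma hnormN x : hnorm (- x) = hnorm x.
Proof. by rewrite /hnorm ipNl ipNr opprK. Qed.

Lemma hnormB x y : hnorm (x - y) = hnorm (y - x).
Proof. by rewrite -hnormN opprB. Qed.

Lemma nsq_sub_proj x y : nsq y != 0 ->
  nsq (x - (ip x y * (nsq y)^-1%:C) *: y) = nsq x - normc (ip x y) ^+ 2 / nsq y.
Proof.
move=> y0; rewrite ipBl !ipBr !ipZl !ipZr (ipC x y) (ipxxE x) (ipxxE y) sqr_normcE.
by case: (ip x y) => p q; simpc => /=; field.
Qed.

Lemma Cauchy_Schwarz x y : normc (ip x y) <= hnorm x * hnorm y.
Proof.
have [y0|y0] := eqVneq (nsq y) 0.
  by rewrite (nsq_eq0 y0) ip0r ComplexField.Normc.normc0 mulr_ge0 ?hnorm_ge0.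
have ny : 0 < nsq y by rewrite lt0r y0 nsq_ge0.
have := nsq_ge0 (x - (ip x y * (nsq y)^-1%:C) *: y).
rewrite nsq_sub_proj // subr_ge0 ler_pdivrMr // => h.
by rewrite -ler_sqr ?nnegrE ?normc_ge0 ?mulr_ge0 ?hnorm_ge0 // exprMn !sqr_hnorm.
Qed.

Lemma hnormD x y : hnorm (x + y) <= hnorm x + hnorm y.
Proof.
rewrite -ler_sqr ?nnegrE ?addr_ge0 ?hnorm_ge0 // sqrrD !sqr_hnorm nsqD mulr2n.
have := le_trans (Re_le_normc _) (Cauchy_Schwarz x y); lra.
Qed.

Lemma parallelogram x y : nsq (x + y) + nsq (x - y) = 2 * nsq x + 2 * nsq y.
Proof. by rewrite !nsqD ipNr ipNl ipNr opprK raddfN /=; ring. Qed.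

Lemma ipr_inj u v : (forall x, ip x u = ip x v) -> u = v.
Proof. by move=> H; apply/eqP; rewrite -subr_eq0; apply/eqP/nsq_eq0; rewrite ipBr H subrr. Qed.

Lemma min_norm_orthogonal l k : (forall s, hnorm l <= hnorm (l + s *: k)) -> ip l k = 0.
Proof.
move=> lmin; have [k0|k0] := eqVneq (nsq k) 0; first by rewrite (nsq_eq0 k0) ip0r.
have nk : 0 < nsq k by rewrite lt0r k0 nsq_ge0.
have := lmin (- (ip l k * (nsq k)^-1%:C)); rewrite scaleNr ler_hnorm nsq_sub_proj // => h.
have : normc (ip l k) ^+ 2 / nsq k <= 0 by lra.
rewrite pmulr_lle0 ?invr_gt0 // => h2; apply: ComplexField.Normc.eq0_normc.
by apply/eqP; rewrite -sqrf_eq0 eq_le h2 sqr_ge0.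
Qed.

Lemma nsq_sub_le_of_midpoint x y (d a b : R) : 0 <= d -> 0 <= a <= 1 -> 0 <= b <= 1 ->
  hnorm x < d + a -> hnorm y < d + b -> 4 * d ^+ 2 <= nsq (x + y) ->
  nsq (x - y) <= (4 * d + 2) * (a + b).
Proof.
move=> d0 /andP[a0 a1] /andP[b0 b1] hx hy hxy.
have sq_lt z c : hnorm z < d + c -> 0 <= c -> nsq z <= (d + c) ^+ 2.
  by move=> hz c0; rewrite -sqr_hnorm; have := hnorm_ge0 z; nra.
have := parallelogram x y; have := sq_lt x a hx a0; have := sq_lt y b hy b0; nra.
Qed.

Definition hnorm_lim (u : nat -> V) l :=
  forall e, 0 < e -> exists n0, forall n, (n0 <= n)%N -> hnorm (u n - l) < e.

Section Hilbert.
Hypothesis ip_compl : ip_complete ip.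

Section MinimalNorm.
Variable A : set V.
Hypothesis A_midpoint : forall x y, A x -> A y -> A ((2^-1 : R)%:C *: (x + y)).

Lemma minimizing_seq_cauchy (d : R) (u : nat -> V) :
  0 <= d -> (forall x, A x -> d <= hnorm x) ->
  (forall n, A (u n) /\ hnorm (u n) < d + n.+1%:R^-1) ->
  forall e, 0 < e -> exists n0, forall m n, (n0 <= m)%N -> (n0 <= n)%N -> hnorm (u m - u n) < e.
Proof.
move=> d0 d_le Hu e e0.
have inv01 n : 0 <= (n.+1%:R^-1 : R) <= 1.
  by rewrite invr_ge0 ler0n invf_le1 ?ltr0Sn // ler1n.
have u_cauchy m n : nsq (u m - u n) <= (4 * d + 2) * (m.+1%:R^-1 + n.+1%:R^-1).
  have [Am hm] := Hu m; have [An hn] := Hu n.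
  apply: nsq_sub_le_of_midpoint => //.
  have := d_le _ (A_midpoint Am An); rewrite hnormZ normc_real ?invr_ge0 //.
  rewrite -ler_sqr ?nnegrE ?mulr_ge0 ?invr_ge0 ?hnorm_ge0 // exprMn sqr_hnorm; lra.
pose q := e ^+ 2 / (2 * (4 * d + 2)).
have q0 : 0 < q by rewrite divr_gt0 ?exprn_gt0 // mulr_gt0 //; lra.
have [n0 Hn0] := invSn_lt q0; exists n0 => m n m0 n0n.
rewrite -ltr_sqr ?nnegrE ?hnorm_ge0 ?ltW // sqr_hnorm.
apply: (le_lt_trans (u_cauchy m n)).
have -> : e ^+ 2 = (4 * d + 2) * (2 * q) by rewrite /q; field; apply: lt0r_neq0; lra.
rewrite ltr_pM2l; last lra.
by rewrite mulr_natl mulr2n; apply: ltrD; [exact: Hn0 | exact: Hn0].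
Qed.

Lemma min_norm_exists x0 : A x0 ->
  (forall u l, (forall n, A (u n)) -> hnorm_lim u l -> A l) ->
  exists2 l, A l & forall x, A x -> hnorm l <= hnorm x.
Proof.
move=> Ax0 A_closed.
pose d := inf [set hnorm x | x in A].
have hinf : has_inf [set hnorm x | x in A].
  by split; [exists (hnorm x0), x0 | exists 0 => _ [x _ <-]; exact: hnorm_ge0].
have d_le x : A x -> d <= hnorm x by move=> Ax; apply: ge_inf; [case: hinf|exists x].
have d0 : 0 <= d by apply: lb_le_inf; [case: hinf | move=> _ [x _ <-]; exact: hnorm_ge0].
have /boolp.choice[u Hu] : forall n, exists x, A x /\ hnorm x < d + n.+1%:R^-1.
  move=> n; have en : 0 < n.+1%:R^-1 :> R by rewrite invr_gt0 ltr0Sn.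
  by have [_ [x Ax <-] hx] := inf_adherent en hinf; exists x.
have [l ul] : exists l, hnorm_lim u l by apply/ip_compl/(minimizing_seq_cauchy d0 d_le Hu).
exists l; first by apply: (A_closed u) => // n; case: (Hu n).
move=> x Ax; apply: le_trans (d_le _ Ax); apply/ler_addgt0Pr => e e0.
have [n1 Hn1] := ul _ (divr_gt0 e0 (ltr0n R 2)).
have [n2 Hn2] := invSn_lt (divr_gt0 e0 (ltr0n R 2)).
pose n := maxn n1 n2; have [_ hn] := Hu n.
have hln : hnorm (l - u n) < e / 2 by rewrite hnormB; exact: Hn1 (leq_maxl _ _).
have := Hn2 n (leq_maxr _ _); have := hnormD (l - u n) (u n); rewrite subrK.
move: hn hln; set a := (n.+1%:R^-1 : R); set b := hnorm (l - u n); lra.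
Qed.

End MinimalNorm.

Section BoundedFunctional.
Variables (f : V -> R[i]) (K : R).
Hypothesis f_lin : forall a x y, f (a *: x + y) = a * f x + f y.
Hypothesis f_bnd : forall x, normc (f x) <= K * hnorm x.

Lemma functional0 : f 0 = 0.
Proof.
have := f_lin 1 0 0; rewrite scaler0 addr0 mul1r => f00.
by apply: (addrI (f 0)); rewrite addr0 -f00.
Qed.

Lemma functionalZ a x : f (a *: x) = a * f x.
Proof. by rewrite -[a *: x]addr0 f_lin functional0 addr0. Qed.

Lemma functionalD x y : f (x + y) = f x + f y.
Proof. by rewrite -{1}[x]scale1r f_lin mul1r. Qed.

Lemma functionalB x y : f (x - y) = f x - f y.
Proof. by rewrite functionalD -scaleN1r functionalZ mulN1r. Qed.

Lemma functional_level_closed c u l : (forall n, f (u n) = c) -> hnorm_lim u l -> f l = c.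
Proof.
move=> fu ul; have [M M0 fM] : exists2 M, 0 < M & forall x, normc (f x) <= M * hnorm x.
  exists (`|K| + 1) => [|x]; first by rewrite ltr_pwDr ?normr_ge0.
  apply: le_trans (f_bnd x) _; rewrite ler_wpM2r ?hnorm_ge0 //.
  by apply: le_trans (ler_norm K) _; rewrite lerDl.
apply/eqP; rewrite -subr_eq0; apply/eqP/ComplexField.Normc.eq0_normc.
apply/le_anti; rewrite normc_ge0 andbT; apply/ler_addgt0Pr => e e0; rewrite add0r.
have [n Hn] := ul _ (divr_gt0 e0 M0).
rewrite -(fu n) -functionalB; apply: le_trans (fM _) _.
by rewrite hnormB -ler_pdivlMl // ltW // mulrC; apply: Hn.
Qed.

(* The point [l] of minimal norm on the hyperplane [f = 1] is orthogonal to [ker f],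
   hence [f x = <x, l> / |l|^2]. *)
Lemma Riesz_representation : exists z, forall x, f x = ip x z.
Proof.
have [f_eq0|[x0 fx0]] : (forall x, f x = 0) \/ exists x0, f x0 != 0.
- case: (boolp.pselect (exists x0, f x0 != 0)) => [|nf]; [by right | left => x].
  by apply/eqP; apply: contra_notT nf => fx; exists x.
- by exists 0 => x; rewrite f_eq0 ip0r.
have [l fl lmin] : exists2 l, f l = 1 & forall x, f x = 1 -> hnorm l <= hnorm x.
  apply: (@min_norm_exists [set x | f x = 1] _ ((f x0)^-1 *: x0)) => /=.
  - by move=> x y fx fy; rewrite functionalZ functionalD fx fy; simpc; congr (_ +i* _); field.
  - by rewrite functionalZ mulVf.
  - by move=> u l fu; apply: functional_level_closed.
have l_orth k : f k = 0 -> ip k l = 0.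
  move=> fk; rewrite ipC (min_norm_orthogonal (k := k)) ?conjc0 // => s.
  by apply: lmin; rewrite -[l + _]addrC f_lin fk mulr0 add0r.
have nl : nsq l != 0.
  by apply: contra_eqN fl => /eqP/nsq_eq0 ->; rewrite functional0 eq_sym oner_eq0.
exists ((nsq l)^-1%:C *: l) => x; rewrite ipZr.
have := l_orth (x - f x *: l); rewrite functionalB functionalZ fl mulr1 subrr.
move=> /(_ erefl) /eqP; rewrite ipBl ipZl ipxxE subr_eq0 => /eqP ->.
by case: (f x) => p q; simpc; congr (_ +i* _); field.
Qed.

End BoundedFunctional.

Local Notation bnd := (bounded_op ip).
Local Notation lincomb a X b Y := (add_op (scale_op a X) (scale_op b Y)).
Implicit Types (S T X Y : V -> V).

Lemma bounded_op_bound T : bnd T -> exists2 M, 0 <= M & forall x, hnorm (T x) <= M * hnorm x.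
Proof.
case=> _ [M HM]; exists `|M| => // x.
by apply: le_trans (HM x) _; rewrite ler_wpM2r ?hnorm_ge0 ?ler_norm.
Qed.

Lemma bounded_opDZ T : bnd T -> forall a x y, T (a *: x + y) = a *: T x + T y.
Proof. by case. Qed.

Lemma bounded_opD T : bnd T -> forall x y, T (x + y) = T x + T y.
Proof. by move=> HT x y; rewrite -[x]scale1r (bounded_opDZ HT) !scale1r. Qed.

Lemma bounded_opZ T : bnd T -> forall a x, T (a *: x) = a *: T x.
Proof.
move=> HT a x; have T0 : T 0 = 0.
  by apply: (addrI (T 0)); rewrite -(bounded_opD HT) !addr0.
by rewrite -[a *: x]addr0 (bounded_opDZ HT) T0 addr0.
Qed.

Lemma bounded_add_op S T : bnd S -> bnd T -> bnd (add_op S T).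
Proof.
move=> HS HT; split=> [a x y|].
  by rewrite /add_op (bounded_opDZ HS) (bounded_opDZ HT) scalerDr addrACA.
have [M1 _ H1] := bounded_op_bound HS; have [M2 _ H2] := bounded_op_bound HT.
exists (M1 + M2) => x; rewrite mulrDl; apply: le_trans (hnormD _ _) _; exact: lerD.
Qed.

Lemma bounded_scale_op c T : bnd T -> bnd (scale_op c T).
Proof.
move=> HT; split=> [a x y|].
  by rewrite /scale_op (bounded_opDZ HT) scalerDr !scalerA mulrC.
have [M _ HM] := bounded_op_bound HT.
by exists (normc c * M) => x; rewrite /scale_op hnormZ -mulrA ler_wpM2l ?normc_ge0.
Qed.

Lemma bounded_comp_op S T : bnd S -> bnd T -> bnd (comp_op S T).
Proof.
move=> HS HT; split=> [a x y|].
  by rewrite /comp_op (bounded_opDZ HT) (bounded_opDZ HS).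
have [M1 M10 H1] := bounded_op_bound HS; have [M2 _ H2] := bounded_op_bound HT.
by exists (M1 * M2) => x; rewrite /comp_op -mulrA; apply: le_trans (H1 _) _; rewrite ler_wpM2l.
Qed.

Lemma adj_exists T : bnd T -> exists S, forall x y, ip (T x) y = ip x (S y).
Proof.
move=> HT; have [M _ HM] := bounded_op_bound HT.
have /boolp.choice[S HS] : forall y, exists z, forall x, ip (T x) y = ip x z.
  move=> y; apply: (Riesz_representation (K := M * hnorm y)) => [a x x'|x].
    by rewrite (bounded_opDZ HT) ipDZl.
  apply: le_trans (Cauchy_Schwarz _ _) _; rewrite mulrAC ler_wpM2r ?hnorm_ge0 //.
by exists S.
Qed.

Lemma adjP T : bnd T -> forall x y, ip (T x) y = ip x (adj ip T y).
Proof. by move=> HT; apply: (epsilon_spec _ _ (adj_exists HT)). Qed.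

Lemma adj_unique T S : bnd T -> (forall x y, ip (T x) y = ip x (S y)) -> adj ip T = S.
Proof. by move=> HT H; apply: funext => y; apply: ipr_inj => x; rewrite -adjP // H. Qed.

Lemma bounded_adj T : bnd T -> bnd (adj ip T).
Proof.
move=> HT; split=> [a x y|].
  by apply: ipr_inj => z; rewrite -adjP // !ipDr !ipZr -!adjP.
have [M M0 HM] := bounded_op_bound HT; exists M => y; set w := adj ip T y.
have h : hnorm w ^+ 2 <= M * hnorm w * hnorm y.
  rewrite sqr_hnorm -(adjP HT); apply: le_trans (Re_le_normc _) _.
  by apply: le_trans (Cauchy_Schwarz _ _) _; rewrite ler_wpM2r ?hnorm_ge0.
have [w0|w0] := eqVneq (hnorm w) 0; first by rewrite w0 mulr_ge0 ?hnorm_ge0.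
by move: h; rewrite expr2 -mulrA mulrCA ler_pM2l // lt0r w0 hnorm_ge0.
Qed.

Lemma adjK T : bnd T -> adj ip (adj ip T) = T.
Proof.
move=> HT; apply: adj_unique; first exact: bounded_adj.
by move=> x y; rewrite ipC -adjP // -ipC.
Qed.

Lemma adjD S T : bnd S -> bnd T -> adj ip (add_op S T) = add_op (adj ip S) (adj ip T).
Proof.
move=> HS HT; apply: adj_unique; first exact: bounded_add_op.
by move=> x y; rewrite /add_op ipDl ipDr -!adjP.
Qed.

Lemma adjZ c T : bnd T -> adj ip (scale_op c T) = scale_op (conjc c) (adj ip T).
Proof.
move=> HT; apply: adj_unique; first exact: bounded_scale_op.
by move=> x y; rewrite /scale_op ipZl ipZr conjc_conjc -adjP.
Qed.

Lemma adj_comp S T : bnd S -> bnd T -> adj ip (comp_op S T) = comp_op (adj ip T) (adj ip S).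
Proof.
move=> HS HT; apply: adj_unique; first exact: bounded_comp_op.
by move=> x y; rewrite /comp_op -!adjP.
Qed.

Lemma bounded_lincomb a X b Y : bnd X -> bnd Y -> bnd (lincomb a X b Y).
Proof. by move=> HX HY; apply: bounded_add_op; apply: bounded_scale_op. Qed.

Lemma bounded_re_op T : bnd T -> bnd (re_op ip T).
Proof. by move=> HT; apply/bounded_scale_op/bounded_add_op/bounded_adj. Qed.

Lemma scale_opA a b X : scale_op a (scale_op b X) = scale_op (a * b) X.
Proof. by apply: funext => x; rewrite /scale_op scalerA. Qed.

Lemma scale_lincomb c a X b Y : scale_op c (lincomb a X b Y) = lincomb (c * a) X (c * b) Y.
Proof. by apply: funext => x; rewrite /scale_op /add_op scalerDr !scalerA. Qed.

Lemma lincomb_same a b X : lincomb a X b X = scale_op (a + b) X.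
Proof. by apply: funext => x; rewrite /add_op /scale_op scalerDl. Qed.

Lemma adj_lincomb a X b Y : bnd X -> bnd Y ->
  adj ip (lincomb a X b Y) = lincomb (conjc a) (adj ip X) (conjc b) (adj ip Y).
Proof. by move=> HX HY; rewrite adjD ?adjZ //; exact: bounded_scale_op. Qed.

Lemma re_adj T : bnd T -> re_op ip (adj ip T) = re_op ip T.
Proof.
by move=> HT; rewrite /re_op adjK //; apply: funext => x; rewrite /scale_op /add_op addrC.
Qed.

Lemma re_scale_real (r : R) T : bnd T -> re_op ip (scale_op r%:C T) = scale_op r%:C (re_op ip T).
Proof.
move=> HT; rewrite /re_op adjZ // /= oppr0.
by apply: funext => x; rewrite /scale_op /add_op -scalerDr !scalerA mulrC.
Qed.

Lemma re_lincomb_adj a b T : bnd T ->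
  re_op ip (lincomb a T b (adj ip T)) = re_op ip (scale_op (a + conjc b) T).
Proof.
move=> HT; have HT' := bounded_adj HT.
rewrite /re_op adj_lincomb // adjK // adjZ // rmorphD /= conjc_conjc.
apply: funext => x; rewrite /scale_op /add_op !scalerDl; congr (_ *: _).
by rewrite addrACA [RHS]addrACA; congr (_ + _); exact: addrC.
Qed.

Lemma re_expi t T : bnd T ->
  re_op ip (scale_op (expi t) T) = lincomb (cos t)%:C (re_op ip T) (- sin t)%:C (im_op ip T).
Proof.
move=> HT; rewrite /re_op /im_op adjZ //; apply: funext => x.
rewrite /scale_op /add_op !scalerDr !scalerA addrACA -!scalerDl invC2 invC2i /expi.
by congr (_ *: _ + _ *: _); simpc; congr (_ +i* _); ring.
Qed.

Lemma lincomb_re_im a b T :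
  lincomb a (re_op ip T) b (im_op ip T) =
  lincomb (2^-1 * (a - 'i * b)) T (2^-1 * (a + 'i * b)) (adj ip T).
Proof.
apply: funext => x; rewrite /re_op /im_op /scale_op /add_op !scalerDr !scalerA.
rewrite addrACA -!scalerDl invC2 invC2i.
by congr (_ *: _ + _ *: _); case: a => a1 a2; case: b => b1 b2; simpc; congr (_ +i* _); ring.
Qed.

Lemma lincomb_sum_diff a b X Y :
  lincomb a (add_op X Y) b (add_op X (scale_op (-1) Y)) = lincomb (a + b) X (a - b) Y.
Proof.
apply: funext => x; rewrite /scale_op /add_op !scalerDr !scalerA addrACA -!scalerDl.
by rewrite mulrN1.
Qed.

Section Unitary.
Variable U : V -> V.
Hypothesis U_unitary : unitary ip U.

Local Notation conjU T := (comp_op (adj ip U) (comp_op T U)).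

Lemma lincomb_conjU a X b Y : lincomb a (conjU X) b (conjU Y) = conjU (lincomb a X b Y).
Proof.
have HU' := bounded_adj (proj1 U_unitary).
by apply: funext => x; rewrite /comp_op /add_op /scale_op (bounded_opD HU') !(bounded_opZ HU').
Qed.

Lemma scale_conjU c X : scale_op c (conjU X) = conjU (scale_op c X).
Proof.
have HU' := bounded_adj (proj1 U_unitary).
by apply: funext => x; rewrite /comp_op /scale_op (bounded_opZ HU').
Qed.

Lemma re_conjU T : bnd T -> re_op ip (conjU T) = conjU (re_op ip T).
Proof.
move=> HT; have [HU _] := U_unitary; have HU' := bounded_adj HU.
rewrite /re_op (adj_comp HU' (bounded_comp_op HT HU)) (adj_comp HT HU) (adjK HU).
apply: funext => x; rewrite /scale_op /add_op /comp_op.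
by rewrite (bounded_opZ HU') (bounded_opD HU').
Qed.

End Unitary.

Section OperatorNorm.
Variable N : (V -> V) -> R.
Hypothesis N_norm : op_norm ip N.

Local Notation sqrt2 := (Num.sqrt 2 : R).
Local Notation wNe := (wNe ip N).
Local Notation wN := (wN ip N).

Lemma N_ge0 T : bnd T -> 0 <= N T.
Proof. by case: N_norm => + _ _ _; apply. Qed.

Lemma N_scale c T : bnd T -> N (scale_op c T) = normc c * N T.
Proof. by case: N_norm => _ _ + _; apply. Qed.

Lemma N_re_scale_real (r : R) T : bnd T -> 0 <= r ->
  N (re_op ip (scale_op r%:C T)) = r * N (re_op ip T).
Proof. by move=> HT r0; rewrite re_scale_real // N_scale ?normc_real //; exact: bounded_re_op. Qed.

Lemma N_re_expi_scale_real t (r : R) T : bnd T -> 0 <= r ->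
  N (re_op ip (scale_op (expi t) (scale_op r%:C T))) = r * N (re_op ip (scale_op (expi t) T)).
Proof.
by move=> HT r0; rewrite scale_opA mulrC -scale_opA N_re_scale_real //; exact: bounded_scale_op.
Qed.

Lemma N_re_scale_polar a T : bnd T ->
  exists t, N (re_op ip (scale_op a T)) = normc a * N (re_op ip (scale_op (expi t) T)).
Proof.
move=> HT; have [t a_polar] := polar a; exists t.
by rewrite {1}a_polar -scale_opA N_re_scale_real ?normc_ge0 //; exact: bounded_scale_op.
Qed.

Lemma ereal_sup_re_scale_disk (A : set (\bar R)) T (r : R) : bnd T -> 0 < r ->
  (forall e, A e -> exists2 a, normc a <= r & e = (N (re_op ip (scale_op a T)))%:E) ->
  (forall t, A (N (re_op ip (scale_op (r%:C * expi t) T)))%:E) ->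
  ereal_sup A = (r%:E * wN T)%E.
Proof.
move=> HT r0 A_disk A_circle.
apply: ereal_sup_cofinal_pZ => // [_ /A_disk[a ar ->] | _ [t _ <-]].
  have [t ->] := N_re_scale_polar a HT.
  exists (N (re_op ip (scale_op (expi t) T)))%:E; first by exists t.
  rewrite -EFinM lee_fin ler_wpM2r // N_ge0 //.
  exact/bounded_re_op/bounded_scale_op.
exists (N (re_op ip (scale_op (r%:C * expi t) T)))%:E => //.
by rewrite -scale_opA N_re_scale_real ?EFinM ?(ltW r0) //; exact: bounded_scale_op.
Qed.

Lemma wNe_diag B : bnd B -> wNe B B = (sqrt2%:E * wN B)%E.
Proof.
move=> HB; apply: ereal_sup_re_scale_disk => //.
  move=> _ [l1 [l2 [t [l12 ->]]]]; exists (expi t * (l1 + l2)).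
    rewrite ComplexField.Normc.normcM normc_expi mul1r.
    exact: le_trans (le_normcD _ _) (normc_add_le_sqrt2 l12).
  by rewrite lincomb_same scale_opA.
move=> t; exists ((sqrt2^-1)%:C * expi t), ((sqrt2^-1)%:C * expi t), 0.
split; first exact: unit_pair_sqrt2_inv.
by rewrite lincomb_same scale_opA expi0 mul1r -mulrDl -rmorphD /= sqrt2_inv_add.
Qed.

Lemma wNe_adj_r B : bnd B -> wNe B (adj ip B) = (sqrt2%:E * wN B)%E.
Proof.
move=> HB; apply: ereal_sup_re_scale_disk => //.
  move=> _ [l1 [l2 [t [l12 ->]]]]; exists (expi t * l1 + conjc (expi t * l2)).
    apply: le_trans (le_normcD _ _) _.
    rewrite normc_conj !ComplexField.Normc.normcM normc_expi !mul1r.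
    exact: normc_add_le_sqrt2.
  by rewrite scale_lincomb re_lincomb_adj.
move=> t; exists ((sqrt2^-1)%:C * expi t), ((sqrt2^-1)%:C * expi (- t)), 0.
split; first exact: unit_pair_sqrt2_inv.
by rewrite scale_lincomb expi0 !mul1r re_lincomb_adj // sqrt2_inv_expi_conj.
Qed.

Lemma wNe_sum_diff B C : bnd B -> bnd C ->
  wNe B C = ((sqrt2^-1)%:E * wNe (add_op B C) (add_op B (scale_op (-1)%R C)))%E.
Proof.
move=> HB HC.
have E a b t : N (re_op ip (scale_op (expi t)
      (lincomb a (add_op B C) b (add_op B (scale_op (-1) C))))) =
    sqrt2 * N (re_op ip (scale_op (expi t)
      (lincomb ((sqrt2^-1)%:C * (a + b)) B ((sqrt2^-1)%:C * (a - b)) C))).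
  rewrite lincomb_sum_diff -{1}[a + b]sqrt2_mulK -{1}[a - b]sqrt2_mulK -scale_lincomb.
  by rewrite N_re_expi_scale_real ?sqrtr_ge0 //; exact: bounded_lincomb.
have sqrt2K (r : R) : ((sqrt2^-1)%:E * (sqrt2 * r)%:E)%E = r%:E.
  by rewrite -EFinM mulrA mulVf ?mul1r // gt_eqF ?sqrt2_gt0.
apply: ereal_sup_cofinal_pZ; first by rewrite invr_gt0 sqrt2_gt0.
  move=> _ [l1 [l2 [t [l12 ->]]]].
  have [h1 h2] := hadamardK l1 l2.
  exists (N (re_op ip (scale_op (expi t) (lincomb ((sqrt2^-1)%:C * (l1 + l2)) (add_op B C)
      ((sqrt2^-1)%:C * (l1 - l2)) (add_op B (scale_op (-1) C))))))%:E.
    by do 3 eexists; split; last reflexivity; exact: unit_pair_hadamard.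
  by rewrite E h1 h2 sqrt2K.
move=> _ [m1 [m2 [t [m12 ->]]]].
exists (N (re_op ip (scale_op (expi t)
    (lincomb ((sqrt2^-1)%:C * (m1 + m2)) B ((sqrt2^-1)%:C * (m1 - m2)) C))))%:E.
  by do 3 eexists; split; last reflexivity; exact: unit_pair_hadamard.
by rewrite E sqrt2K.
Qed.

Lemma wNe_re_im B : bnd B ->
  wNe (re_op ip B) (im_op ip B) = ((sqrt2^-1)%:E * wNe B (adj ip B))%E.
Proof.
move=> HB; have HB' := bounded_adj HB.
have E a b t : N (re_op ip (scale_op (expi t) (lincomb a (re_op ip B) b (im_op ip B)))) =
    sqrt2^-1 * N (re_op ip (scale_op (expi t) (lincomb ((sqrt2^-1)%:C * (a - 'i * b)) B
      ((sqrt2^-1)%:C * (a + 'i * b)) (adj ip B)))).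
  rewrite lincomb_re_im -sqrt2_invC_sqr -!mulrA -(scale_lincomb _ ((sqrt2^-1)%:C * (a - _))).
  by rewrite N_re_expi_scale_real ?invr_ge0 ?sqrtr_ge0 //; exact: bounded_lincomb.
apply: ereal_sup_cofinal_pZ; first by rewrite invr_gt0 sqrt2_gt0.
  move=> _ [l1 [l2 [t [l12 ->]]]].
  exists (N (re_op ip (scale_op (expi t) (lincomb ((sqrt2^-1)%:C * (l1 - 'i * l2)) B
      ((sqrt2^-1)%:C * (l1 + 'i * l2)) (adj ip B)))))%:E; last by rewrite E EFinM.
  do 3 eexists; split; last reflexivity.
  have := @unit_pair_hadamard _ l1 (- ('i * l2)); rewrite opprK; apply.
  by apply: unit_pair_normc l12; rewrite // normcN normc_i.
move=> _ [m1 [m2 [t [m12 ->]]]].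
have [h1 h2] := hadamardK m1 m2.
exists (N (re_op ip (scale_op (expi t) (lincomb ((sqrt2^-1)%:C * (m1 + m2)) (re_op ip B)
    ('i * ((sqrt2^-1)%:C * (m1 - m2))) (im_op ip B)))))%:E.
  do 3 eexists; split; last reflexivity.
  by apply: unit_pair_normc (unit_pair_hadamard m12); rewrite ?normc_i.
by rewrite E !mulr_ii opprK h1 h2 EFinM.
Qed.

Lemma wNe_adj_le B C : bnd B -> bnd C -> (wNe (adj ip B) (adj ip C) <= wNe B C)%E.
Proof.
move=> HB HC; apply: ge_ereal_sup => _ [l1 [l2 [t [l12 ->]]]].
apply: le_ereal_sup_tmp; exists (N (re_op ip (scale_op (expi (- t))
    (lincomb (conjc l1) B (conjc l2) C))))%:E => //.
  by exists (conjc l1), (conjc l2), (- t); split => //; exact: unit_pair_conj.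
have [HB' HC'] := (bounded_adj HB, bounded_adj HC).
have HL := bounded_lincomb l1 l2 HB' HC'.
rewrite -(re_adj (bounded_scale_op (expi t) HL)) (adjZ _ HL) (adj_lincomb _ _ HB' HC').
by rewrite (adjK HB) (adjK HC) conjc_expi.
Qed.

Lemma wNe_adj B C : bnd B -> bnd C -> wNe (adj ip B) (adj ip C) = wNe B C.
Proof.
move=> HB HC; apply/le_anti/andP; split; first exact: wNe_adj_le.
by have := wNe_adj_le (bounded_adj HB) (bounded_adj HC); rewrite !adjK.
Qed.

Lemma wNe_conjU U B C : weakly_unitarily_invariant ip N -> unitary ip U -> bnd B -> bnd C ->
  wNe (comp_op (adj ip U) (comp_op B U)) (comp_op (adj ip U) (comp_op C U)) = wNe B C.
Proof.
move=> N_inv HU HB HC.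
have E a b t : N (re_op ip (scale_op (expi t)
      (lincomb a (comp_op (adj ip U) (comp_op B U)) b (comp_op (adj ip U) (comp_op C U))))) =
    N (re_op ip (scale_op (expi t) (lincomb a B b C))).
  have HT := bounded_scale_op (expi t) (bounded_lincomb a b HB HC).
  by rewrite lincomb_conjU // scale_conjU // re_conjU // N_inv //; exact: bounded_re_op.
apply: ereal_sup_cofinal => _ [l1 [l2 [t [l12 ->]]]];
  exists (N (re_op ip (scale_op (expi t) (lincomb l1 B l2 C))))%:E; rewrite ?E //;
  by exists l1, l2, t; rewrite ?E.
Qed.

Lemma wNe_re_im_rotation B C : bnd B -> bnd C ->
  wNe B C = ereal_sup [set x : \bar R | exists (l1 l2 : R[i]) (a b : R),
    unit_pair l1 l2 /\ (a ^+ 2 + b ^+ 2 = 1)%R /\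
    x = (N (lincomb a%:C (re_op ip (lincomb l1 B l2 C)) b%:C (im_op ip (lincomb l1 B l2 C))))%:E].
Proof.
move=> HB HC; have HL l1 l2 := bounded_lincomb l1 l2 HB HC.
apply: ereal_sup_cofinal.
  move=> _ [l1 [l2 [t [l12 ->]]]]; rewrite re_expi //.
  exists (N (lincomb (cos t)%:C (re_op ip (lincomb l1 B l2 C))
      (- sin t)%:C (im_op ip (lincomb l1 B l2 C))))%:E => //.
  by exists l1, l2, (cos t), (- sin t); rewrite sqrrN cos2Dsin2.
move=> _ [l1 [l2 [a [b [l12 [ab ->]]]]]].
have [t [ca sb]] : exists t, cos t = a /\ sin t = - b by apply: unit_circle_cos_sin; rewrite sqrrN.
exists (N (re_op ip (scale_op (expi t) (lincomb l1 B l2 C))))%:E.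
  by exists l1, l2, t.
by rewrite re_expi // ca sb opprK.
Qed.

End OperatorNorm.

End Hilbert.

End InnerProduct.

Local Close Scope complex_scope.

Theorem proposition2p3 (R : realType) (V : lmodType R[i]) (ip : V -> V -> R[i])
    (N : (V -> V) -> R) (B C : V -> V) :
  hilbert ip -> op_norm ip N -> bounded_op ip B -> bounded_op ip C ->
  (* (a) *)
  wNe ip N B C
    = (((Num.sqrt 2 : R)^-1)%:E * wNe ip N (add_op B C) (add_op B (scale_op (-1)%R C)))%E
  (* (b) *)
  /\ wNe ip N (re_op ip B) (im_op ip B)
       = (((Num.sqrt 2 : R)^-1)%:E * wNe ip N B (adj ip B))%E
  /\ (((Num.sqrt 2 : R)^-1)%:E * wNe ip N B (adj ip B))%E = wN ip N B
  (* (c) *)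
  /\ wNe ip N B B = ((Num.sqrt 2 : R)%:E * wN ip N B)%E
  (* (d) *)
  /\ wNe ip N (adj ip B) (adj ip C) = wNe ip N B C
  (* (e) *)
  /\ (weakly_unitarily_invariant ip N ->
      forall U, unitary ip U ->
        wNe ip N (comp_op (adj ip U) (comp_op B U)) (comp_op (adj ip U) (comp_op C U))
          = wNe ip N B C)
  (* (f) *)
  /\ wNe ip N B C
       = ereal_sup [set x : \bar R | exists (l1 l2 : R[i]) (a b : R),
            unit_pair l1 l2 /\ (a ^+ 2 + b ^+ 2 = 1)%R /\
            x = (N (add_op
                  (scale_op (a%:C)%C (re_op ip (add_op (scale_op l1 B) (scale_op l2 C))))
                  (scale_op (b%:C)%C (im_op ip (add_op (scale_op l1 B) (scale_op l2 C))))))%:E].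
Proof.
move=> [ip_inner ip_compl] N_norm HB HC.
split; first exact: wNe_sum_diff.
split; first exact: wNe_re_im.
split; first by rewrite (wNe_adj_r ip_inner ip_compl N_norm HB) muleA -EFinM mulVf ?mul1e.
split; first exact: wNe_diag.
split; first exact: wNe_adj.
split; first by move=> N_inv U HU; exact: wNe_conjU.
exact: wNe_re_im_rotation.
Qed.
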